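(* Let $\mathcal{A}=(Q,\Sigma,\delta)$ be a synchronizing DFA with $n$ states. If there is a letter $a\in\Sigma$ of rank $r=|Q.a|\le\sqrt[3]{6n-6}$, then $\mathrm{rt}(\mathcal{A})\le(n-1)^2$.
   Context: A DFA $\mathcal{A}=(Q,\Sigma,\delta)$ has finite state set $Q$ with $|Q|=n$, finite alphabet $\Sigma$, total transition function extended to words; $Q.w=\{\delta(q,w)\mid q\in Q\}$. The rank of a word $w$ is $|Q.w|$. A reset word is a word of rank $1$; $\mathcal{A}$ is synchronizing if one exists, and $\mathrm{rt}(\mathcal{A})$ is the length of a shortest reset word. *)

From mathcomp Require Import all_boot.
Set Implicit Arguments. Unset Strict Implicit. Unset Printing Implicit Defensive.

Definition delta_word (Q S : finType) (delta : Q -> S -> Q) (q : Q) (w : seq S) : Q :=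
  foldl delta q w.

Definition image_word (Q S : finType) (delta : Q -> S -> Q) (w : seq S) : {set Q} :=
  [set delta_word delta q w | q in Q].

Definition rank_word (Q S : finType) (delta : Q -> S -> Q) (w : seq S) : nat :=
  #|image_word delta w|.

Definition reset_word (Q S : finType) (delta : Q -> S -> Q) (w : seq S) : bool :=
  rank_word delta w == 1.

Definition synchronizing (Q S : finType) (delta : Q -> S -> Q) : Prop :=
  exists w, reset_word delta w.

Definition rt (Q S : finType) (delta : Q -> S -> Q) (H : synchronizing delta) : nat :=
  ex_minn (P := fun m => [exists w : m.-tuple S, reset_word delta w])
    (let: ex_intro w Hw := H in
     ex_intro _ (size w) (introT existsP (ex_intro _ (in_tuple w) Hw))).

(* Let U = Q.a and r = |U|.  The words u a with |u| <= n - 1 act on U and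
   synchronize it: if |Q.W| > 1, some such u makes Q.WuW smaller than Q.W, for
   otherwise every short u permutes Q.W, a linear condition on the transition
   matrices that extends from the words of length <= n - 1 to all words,
   including a reset word, which is absurd.  Over this restricted alphabet a
   shortest word compressing a k-subset T of U has length at most C(r - k + 2, 2):
   the sets reached after its prefixes, paired with the preimages of the two
   states merged by its last letter, form a skew Bollobas system of pairs whose
   co-sets have size r - k.  Compressing U one state at a time thus costs
   sum_(k = 2..r) C(r - k + 2, 2) = C(r + 1, 3) restricted letters of length at
   most n, so rt <= 1 + n C(r + 1, 3) <= (n - 1)^2 as soon as r^3 <= 6n - 6. *)

From mathcomp Require Import all_boot all_algebra.
From mathcomp Require Import ring zify.
From Stdlib Require Import Classical.
Set Implicit Arguments. Unset Strict Implicit. Unset Printing Implicit Defensive.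
Import GRing.Theory Num.Theory.

Section KrylovSpace.
Variables (F : fieldType) (n : nat) (L : finType) (A : L -> 'M[F]_n) (v : 'rV[F]_n).
Local Open Scope ring_scope.

Fixpoint mx_word (w : seq L) : 'rV[F]_n :=
  if w is x :: w' then mx_word w' *m A x else v.

Fixpoint krylov (k : nat) : 'M[F]_n :=
  if k is k'.+1 then (<<v>> + \sum_x krylov k' *m A x)%MS else <<v>>%MS.

Lemma mx_word_sub w : (mx_word w <= krylov (size w))%MS.
Proof.
elim: w => [|x w IH] /=; first by rewrite genmxE.
apply: submx_trans (addsmxSr _ _).
by apply: (sumsmx_sup x) => //; apply: submxMr.
Qed.

Lemma krylov_subS k : (krylov k <= krylov k.+1)%MS.
Proof.
elim: k => [|k IH] /=; first exact: addsmxSl.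
by apply: addsmxS => //; apply: sumsmxS => x _; apply: submxMr.
Qed.

Lemma krylov_sub i j : (i <= j)%N -> (krylov i <= krylov j)%MS.
Proof.
move/subnK <-; elim: (j - i)%N => [|d IH]; first by rewrite add0n.
exact: submx_trans IH (krylov_subS _).
Qed.

Lemma krylov_stableS k :
  (krylov k.+1 <= krylov k)%MS -> (krylov k.+2 <= krylov k.+1)%MS.
Proof. by move=> stab /=; apply: addsmxS => //; apply: sumsmxS => x _; apply: submxMr. Qed.

Lemma krylov_sub_stable k :
  (krylov k.+1 <= krylov k)%MS -> forall j, (krylov j <= krylov k)%MS.
Proof.
move=> stab j; case: (leqP j k) => [|/ltnW]; first exact: krylov_sub.
move/subnK <-; elim: (j - k)%N => [|d IH]; first by rewrite add0n.
suff stab_d : (krylov (d + k).+1 <= krylov (d + k))%MS by exact: submx_trans stab_d IH.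
by elim: d {IH} => // d; apply: krylov_stableS.
Qed.

Lemma krylov_stable_or_rank k :
  (krylov k.+1 <= krylov k)%MS \/ (k < \rank (krylov k))%N.
Proof.
elim: k => [|k [stab|rank_k]].
- have [v0|v_neq0] := eqVneq v 0; last by right; rewrite /= genmxE lt0n mxrank_eq0.
  left; rewrite /= addsmx_sub submx_refl; apply/sumsmx_subP => x _.
  by rewrite v0 genmx0 mul0mx sub0mx.
- by left; apply: krylov_stableS.
case: (boolP (krylov k.+2 <= krylov k.+1)%MS) => [|unstab]; first by left.
right; apply: leq_ltn_trans rank_k _.
rewrite (ltn_leqif (mxrank_leqif_sup (krylov_subS k))).
by apply: contraNN unstab; apply: krylov_stableS.
Qed.

Lemma krylov_sub_last j : (krylov j <= krylov n.-1)%MS.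
Proof.
have [stab|full] := krylov_stable_or_rank n.-1.
  exact: krylov_sub_stable.
apply: submx_full; rewrite /row_full eqn_leq rank_leq_col /=.
exact: leq_trans (leqSpred n) full.
Qed.

Lemma krylov_mul_eq0 k (h : 'cV[F]_n) :
  (forall w, (size w <= k)%N -> mx_word w *m h = 0) -> krylov k *m h = 0.
Proof.
elim: k h => [|k IH] h vanish /=; apply/sub_kermxP.
  by rewrite genmxE; apply/sub_kermxP; apply: (vanish [::]).
rewrite addsmx_sub genmxE; apply/andP; split; first exact/sub_kermxP/(vanish [::]).
apply/sumsmx_subP => x _; apply/sub_kermxP; rewrite -mulmxA.
by apply: IH => w w_le; rewrite mulmxA; apply: (vanish (x :: w)).
Qed.

Lemma mx_word_mul_eq0 (h : 'cV[F]_n) :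
  (forall w, (size w <= n.-1)%N -> mx_word w *m h = 0) ->
  forall w, mx_word w *m h = 0.
Proof.
move=> vanish w.
have /submxP [D ->] := submx_trans (mx_word_sub w) (krylov_sub_last (size w)).
by rewrite -mulmxA krylov_mul_eq0 ?mulmx0.
Qed.

End KrylovSpace.

Definition bideg_exponents (b : nat) : seq (nat * nat) :=
  [seq (j, (i - j)%N) | i <- iota 0 b.+1, j <- iota 0 i.+1].

Lemma size_bideg_exponents b : size (bideg_exponents b) = 'C(b.+2, 2).
Proof.
rewrite /bideg_exponents size_allpairs_dep.
elim: b => [|b IH] //.
rewrite -[b.+2]addn1 iotaD map_cat sumn_cat IH /= size_iota addn0 addn1.
by rewrite [RHS]binS bin1.
Qed.

Lemma mem_bideg_exponents b i j : (i + j <= b)%N -> (i, j) \in bideg_exponents b.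
Proof.
move=> ij_le; apply/allpairsPdep; exists (i + j)%N, i; split.
- by rewrite mem_iota add0n ltnS.
- by rewrite mem_iota add0n ltnS leq_addr.
- by rewrite addKn.
Qed.

Section SkewBollobasPairs.
Variables (T : finType) (m b : nat) (X Y : 'I_m -> {set T}).
Hypotheses (card_X : forall i, #|X i| = 2) (card_Y : forall i, (#|Y i| <= b)%N)
  (disjoint_XY : forall i, [disjoint X i & Y i])
  (meet_XY : forall i j : 'I_m, (i < j)%N -> ~~ [disjoint X j & Y i]).
Local Open Scope ring_scope.

Let coord (x : T) : rat := (enum_rank x : nat)%:R.
Let sumX j := \sum_(x in X j) coord x.
Let prodX j := \prod_(x in X j) coord x.

Lemma coord_inj : injective coord.
Proof. by move=> x y /eqP; rewrite eqr_nat => /eqP/val_inj/enum_rank_inj. Qed.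

Lemma prodX_sub j y : \prod_(x in X j) (coord x - y) = y ^+ 2 - y * sumX j + prodX j.
Proof.
rewrite /sumX /prodX; have /eqP/cards2P [x1 [x2 [x12 ->]]] := card_X j.
by rewrite !big_setU1 ?in_set1 // !big_set1 /=; ring.
Qed.

(* Row [i] of [M] evaluates at the pairs [X j] the polynomial
   [prod_(y in Y i) (y^2 - y s + p)] in [s = t1 + t2], [p = t1 t2], of degree at
   most [b], so [M] lies in the span of the monomial rows of [E]; the skew
   condition makes [M] triangular with a nonzero diagonal. *)
Let M : 'M[rat]_m :=
  \matrix_(i, j) \prod_(y in Y i) \prod_(x in X j) (coord x - coord y).

Let E : 'M[rat]_(size (bideg_exponents b), m) :=
  \matrix_(k, j) (let e := nth (0, 0)%N (bideg_exponents b) k in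
                  sumX j ^+ e.1 * prodX j ^+ e.2).

Let symrow e1 e2 (ys : seq T) : 'rV[rat]_m :=
  \row_j (sumX j ^+ e1 * prodX j ^+ e2 *
          \prod_(y <- ys) (coord y ^+ 2 - coord y * sumX j + prodX j)).

Lemma symrow_sub ys e1 e2 : (e1 + e2 + size ys <= b)%N -> (symrow e1 e2 ys <= E)%MS.
Proof.
elim: ys e1 e2 => [|y ys IH] e1 e2 /= deg_le.
  have e_in := mem_bideg_exponents (leq_trans (leq_addr 0 _) deg_le).
  rewrite -index_mem in e_in.
  have -> : symrow e1 e2 [::] = row (Ordinal e_in) E.
    by apply/rowP => j; rewrite !mxE big_nil mulr1 /= nth_index // -index_mem.
  exact: row_sub.
have -> : symrow e1 e2 (y :: ys) = (coord y ^+ 2) *: symrow e1 e2 ys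
    - coord y *: symrow e1.+1 e2 ys + symrow e1 e2.+1 ys.
  apply/rowP => j; rewrite !mxE big_cons !exprS expr0.
  set P := \prod_(_ <- ys) _; move: P (sumX j) (prodX j) (coord y) => P s p z; ring.
rewrite addnS in deg_le.
rewrite addmx_sub // ?addmx_sub ?eqmx_opp ?scalemx_sub // IH //.
- exact: ltnW.
- by rewrite addnS.
Qed.

Lemma M_sub_E : (M <= E)%MS.
Proof.
apply/row_subP => i.
have -> : row i M = symrow 0 0 (enum (Y i)).
  apply/rowP => j; rewrite !mxE expr0 !mul1r big_enum /=.
  by apply: eq_bigr => y _; rewrite prodX_sub.
by apply: symrow_sub; rewrite !add0n -cardE card_Y.
Qed.

Lemma det_M_neq0 : \det M != 0.
Proof.
rewrite det_trig; last first.
  apply/is_trig_mxP => i j ij; rewrite mxE.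
  move: (meet_XY ij); rewrite -setI_eq0 => /set0Pn [x /setIP [xXj xYi]].
  apply/eqP/prodf_eq0; exists x => //; apply/prodf_eq0; exists x => //.
  by rewrite subrr.
apply/prodf_neq0 => i _; rewrite mxE; apply/prodf_neq0 => y yYi.
apply/prodf_neq0 => x xXi; rewrite subr_eq0; apply: contraTneq xXi => /coord_inj ->.
by move: (disjoint_XY i); rewrite disjoint_sym => /disjointFr ->.
Qed.

Lemma skew_bollobas_pairs : (m <= 'C(b.+2, 2))%N.
Proof.
have M_unit : M \in unitmx by rewrite unitmxE unitfE det_M_neq0.
rewrite -size_bideg_exponents -(mxrank_unit M_unit).
exact: leq_trans (mxrankS M_sub_E) (rank_leq_row _).
Qed.
End SkewBollobasPairs.

Lemma card_imset_ltn (T1 T2 : finType) (f : T1 -> T2) (A : {set T1}) x y :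
  x \in A -> y \in A -> x != y -> f x = f y -> #|f @: A| < #|A|.
Proof.
move=> xA yA xy fxy; rewrite ltn_neqAle leq_imset_card andbT.
by apply: contra_neqN xy => /imset_injP; apply.
Qed.

Lemma card_imset_ltnP (T1 T2 : finType) (f : T1 -> T2) (A : {set T1}) :
  #|f @: A| < #|A| -> exists x y, [/\ x \in A, y \in A, x != y & f x = f y].
Proof.
case: (boolP [exists x in A, exists y in A, (x != y) && (f x == f y)]).
  by case/exists_inP=> x xA /exists_inP [y yA /andP [xy /eqP fxy]]; exists x, y.
move=> no_collision; rewrite card_in_imset ?ltnn // => x y xA yA fxy.
apply/eqP/negPn/negP => xy; move/negP: no_collision; apply.
by apply/exists_inP; exists x => //; apply/exists_inP; exists y; rewrite // xy fxy eqxx.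
Qed.

Lemma all_take (T : Type) (a : pred T) s i : all a s -> all a (take i s).
Proof. by rewrite -{1}(cat_take_drop i s) all_cat => /andP []. Qed.

Lemma all_drop (T : Type) (a : pred T) s i : all a s -> all a (drop i s).
Proof. by rewrite -{1}(cat_take_drop i s) all_cat => /andP []. Qed.

Lemma ex_minsize (L : Type) (P : seq L -> Prop) :
  (exists w, P w) -> exists w, P w /\ (forall w', P w' -> size w <= size w').
Proof.
move=> [w Pw]; have [c] := ubnP (size w); elim: c w Pw => // c IH w Pw size_lt.
have [[w' [Pw' w'_lt]] | no_shorter] := classic (exists w', P w' /\ size w' < size w).
  exact: IH w' Pw' (leq_trans w'_lt size_lt).
exists w; split => // w' Pw'; rewrite leqNgt; apply/negP => w'_lt.
by apply: no_shorter; exists w'.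
Qed.

Section RestrictedAction.
Variables (Q : finType) (L : Type) (act : L -> Q -> Q) (ok : pred L) (U : {set Q}).
Hypothesis act_in_U : forall l s, act l s \in U.

Definition act_word (w : seq L) s := foldl (fun s l => act l s) s w.
Definition act_set (T : {set Q}) w := [set act_word w s | s in T].
Definition compressing (T : {set Q}) w := all ok w && (#|act_set T w| < #|T|).

Lemma act_word_cat w1 w2 s : act_word (w1 ++ w2) s = act_word w2 (act_word w1 s).
Proof. by rewrite /act_word foldl_cat. Qed.

Lemma act_set_cat (T : {set Q}) w1 w2 : act_set T (w1 ++ w2) = act_set (act_set T w1) w2.
Proof. by rewrite /act_set -imset_comp; apply: eq_imset => s /=; apply: act_word_cat. Qed.

Lemma act_set_nil (T : {set Q}) : act_set T [::] = T.
Proof. exact: imset_id. Qed.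

Lemma act_set_sub (T : {set Q}) w : T \subset U -> act_set T w \subset U.
Proof.
move/subsetP=> TU; apply/subsetP => _ /imsetP [s sT ->].
by elim: w s {sT}(TU s sT) => //= l w IH s _; apply: IH.
Qed.

Section ShortestCompressingWord.
Variables (T : {set Q}) (w : seq L) (l : L) (p q : Q).
Hypotheses (T_sub_U : T \subset U) (ok_w : all ok w) (ok_l : ok l)
  (shortest : forall w', all ok w' -> size w' <= size w -> #|act_set T w'| = #|T|)
  (p_in : p \in act_set T w) (q_in : q \in act_set T w) (p_neq_q : p != q)
  (l_merges : act l p = act l q).

Let k := size w.
Let prefix_set (i : 'I_k.+1) := act_set T (take i w).
Let pair_preimage (i : 'I_k.+1) := [set s in U | act_word (drop i w) s \in [set p; q]].

Lemma card_prefix_set i : #|prefix_set i| = #|T|.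
Proof.
by apply: shortest; rewrite ?all_take // size_take_min geq_minr.
Qed.

Lemma prefix_set_sub i : prefix_set i \subset U.
Proof. exact: act_set_sub. Qed.

Lemma card_prefix_pair_gt1 i : 1 < #|prefix_set i :&: pair_preimage i|.
Proof.
have prefix_split : act_set T w = act_set (prefix_set i) (drop i w).
  by rewrite -act_set_cat cat_take_drop.
move: p_in q_in; rewrite prefix_split => /imsetP [sp sp_in p_def] /imsetP [sq sq_in q_def].
have in_U s : s \in prefix_set i -> s \in U by apply/subsetP/prefix_set_sub.
apply/card_gt1P; exists sp, sq; rewrite !inE sp_in sq_in !in_U //= -p_def -q_def.
rewrite !eqxx orbT; split => //.
by apply: contra_neq p_neq_q => eq_s; rewrite p_def q_def eq_s.
Qed.

(* Two states of [prefix_set i] merged by [rcons (drop j w) l] would make the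
   shorter word [take i w ++ rcons (drop j w) l] compress [T]. *)
Lemma card_prefix_pair_le1 (i j : 'I_k.+1) :
  i < j -> #|prefix_set i :&: pair_preimage j| <= 1.
Proof.
move=> ij; rewrite leqNgt; apply/negP => /card_gt1P [s [s' []]].
rewrite !inE => /and3P [s_in _ s_pair] /and3P [s'_in _ s'_pair] ss'.
pose w' := take i w ++ rcons (drop j w) l.
have ok_w' : all ok w' by rewrite all_cat all_rcons ok_l all_take ?all_drop.
have j_le : j <= k by rewrite -ltnS.
have size_w' : size w' <= k.
  rewrite size_cat size_rcons size_drop size_takel ?(leq_trans (ltnW ij)) //.
  by rewrite addnS -addSn (leq_trans (leq_add ij (leqnn _))) // subnKC.
have merge t : (t == p) || (t == q) -> act l t = act l p.
  by case/orP => /eqP ->; rewrite ?l_merges.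
have := card_prefix_set i.
rewrite -(shortest ok_w' size_w') /w' act_set_cat -cats1.
move/eqP; rewrite gtn_eqF //; apply: (card_imset_ltn s_in s'_in ss').
by rewrite !act_word_cat /= (merge _ s_pair) (merge _ s'_pair).
Qed.

Lemma shortest_compressing_size : k.+1 <= 'C(#|U| - #|T| + 2, 2).
Proof.
have ex_pair i :
    exists X : {set Q}, (X \subset prefix_set i :&: pair_preimage i) && (#|X| == 2).
  have /card_gt1P [x [y [x_in y_in xy]]] := card_prefix_pair_gt1 i.
  exists [set x; y]; rewrite cards2 xy eqxx andbT.
  by apply/subsetP => z /set2P [] ->.
pose X i := xchoose (ex_pair i).
have /all_and2 [X_sub card_X] :
    forall i, X i \subset prefix_set i :&: pair_preimage i /\ #|X i| = 2.
  by move=> i; have /andP [-> /eqP ->] := xchooseP (ex_pair i).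
rewrite addn2; apply: (@skew_bollobas_pairs _ _ _ X (fun i => U :\: prefix_set i)) => //.
- by move=> i; rewrite cardsD (setIidPr (prefix_set_sub i)) card_prefix_set.
- move=> i; rewrite disjoints_subset setCD.
  exact: subset_trans (X_sub i) (subset_trans (subsetIl _ _) (subsetUr _ _)).
move=> i j ij; apply/negP => disj.
have : X j \subset prefix_set i :&: pair_preimage j.
  apply/subsetP => x xXj; have /setIP [_ x_pair] := subsetP (X_sub j) x xXj.
  rewrite inE x_pair andbT; have /setIdP [xU _] := x_pair.
  by have := disjointFr disj xXj; rewrite inE xU andbT => /negbFE.
by move/subset_leq_card; rewrite card_X leqNgt (leq_ltn_trans (card_prefix_pair_le1 ij)).
Qed.
End ShortestCompressingWord.

Lemma short_compressing_word (T : {set Q}) : T \subset U -> (exists w, compressing T w) ->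
  exists w, compressing T w /\ size w <= 'C(#|U| - #|T| + 2, 2).
Proof.
move=> T_sub_U /ex_minsize [w [compress_w minimal]]; exists w; split; first exact: compress_w.
have shortest w' : all ok w' -> size w' < size w -> #|act_set T w'| = #|T|.
  move=> ok_w' w'_lt; apply/eqP; rewrite eqn_leq leq_imset_card leqNgt.
  apply: contraTN w'_lt => compress_w'; rewrite -leqNgt.
  by apply: minimal; rewrite /compressing ok_w'.
case/lastP: w compress_w {minimal} shortest => [|w l].
  by rewrite /compressing act_set_nil ltnn.
rewrite /compressing all_rcons size_rcons => /andP [/andP [ok_l ok_w] compress] shortest.
have card_w : #|act_set T w| = #|T| by apply: shortest.
move: compress; rewrite -cats1 act_set_cat -[in X in _ < X]card_w.
case/card_imset_ltnP => [p [q [p_in q_in pq lpq]]].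
apply: (shortest_compressing_size T_sub_U ok_w ok_l _ p_in q_in pq lpq) => w' ok_w' w'_le.
exact: shortest.
Qed.
End RestrictedAction.

Definition compression_budget (r k : nat) := \sum_(2 <= t < k.+1) 'C(r - t + 2, 2).

Lemma compression_budget_pred r k :
  1 < k -> compression_budget r k = compression_budget r k.-1 + 'C(r - k + 2, 2).
Proof. by case: k => // k k_gt1; rewrite /compression_budget big_nat_recr. Qed.

Lemma compression_budget_mono r : {homo compression_budget r : a b / a <= b}.
Proof.
move=> a b ab; rewrite /compression_budget.
case: (leqP a 1) => [a_le1|a_gt1]; first by rewrite big_geq.
by rewrite [X in _ <= X](big_cat_nat _ (n := a.+1)) /= ?leq_addr ?ltnS // ltnW.
Qed.

Lemma compression_budget_diag r : compression_budget r r = 'C(r.+1, 3).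
Proof.
elim: r => [|[|r] IH]; rewrite /compression_budget; try by rewrite big_geq.
rewrite big_nat_recl //; under eq_bigr do rewrite subSS.
by rewrite -/(compression_budget r.+1 r.+1) IH subnK // [RHS]binS addnC.
Qed.

Lemma bin3_cube r : 6 * 'C(r.+1, 3) + r = r ^ 3.
Proof.
have := bin_ffact r.+1 3; rewrite !ffactnS ffactn0 /= => six_bin.
by case: r six_bin => [|r] //; rewrite (_ : 3`! = 6) //; nia.
Qed.

Lemma cubic_budget_le n r :
  0 < r -> r ^ 3 <= 6 * n - 6 -> 1 + n * 'C(r.+1, 3) <= (n - 1) ^ 2.
Proof.
move=> r_gt0 r3_le; have := bin3_cube r; move: ('C(r.+1, 3)) => c cube.
have r3_gt0 : 0 < r ^ 3 by rewrite expn_gt0 r_gt0.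
have c_le : c <= n - 2 by nia.
nia.
Qed.

Section AutomatonWords.
Variables (Q S : finType) (delta : Q -> S -> Q).
Local Notation dw := (delta_word delta).

Lemma delta_word_cat q u v : dw q (u ++ v) = dw (dw q u) v.
Proof. exact: foldl_cat. Qed.

Lemma image_word_cat W u : image_word delta (W ++ u) = [set dw q u | q in image_word delta W].
Proof. by rewrite /image_word -imset_comp; apply: eq_imset => q; apply: delta_word_cat. Qed.

Lemma reset_word_const w : reset_word delta w -> exists t, forall q, dw q w = t.
Proof.
rewrite /reset_word /rank_word => /cards1P [t image_t]; exists t => q.
by apply/set1P; rewrite -image_t; apply: imset_f.
Qed.

Lemma rt_leq_size (sync : synchronizing delta) w : reset_word delta w -> rt sync <= size w.
Proof.
move=> reset_w; rewrite /rt; case: ex_minnP => m _; apply.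
by apply/existsP; exists (in_tuple w).
Qed.

Lemma card_fiber_eq1 (W u : seq S) t : t \in image_word delta W ->
  rank_word delta W <= rank_word delta (W ++ u ++ W) ->
  #|[set s in image_word delta W | dw s (u ++ W) == t]| = 1.
Proof.
set T := image_word delta W; set f := fun s => dw s (u ++ W) => tT.
rewrite /rank_word image_word_cat -/T => card_le.
have fT_sub : f @: T \subset T.
  by apply/subsetP => _ /imsetP [s _ ->]; rewrite /f delta_word_cat; apply: imset_f.
have fT : f @: T = T by apply/eqP; rewrite eqEcard fT_sub.
have f_inj : {in T &, injective f} by apply/imset_injP; rewrite fT.
move: tT; rewrite -{1}fT => /imsetP [s0 s0T ->].
apply/eqP/cards1P; exists s0; apply/setP => s; rewrite !inE.
apply/andP/eqP => [[sT /eqP fs]|->]; last by rewrite s0T.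
exact: f_inj.
Qed.

Local Open Scope ring_scope.

Lemma sumr_bool_card (T : finType) (A : {set T}) (P : pred T) :
  \sum_(x in A) (P x)%:R = #|[set x in A | P x]|%:R :> rat.
Proof.
rewrite -natr_sum -sum1dep_card [in RHS]big_mkcond [in LHS]big_mkcond /=.
by congr _%:R; apply: eq_bigr => x _; case: (x \in A); case: (P x).
Qed.

Definition state_row (f : Q -> rat) : 'rV[rat]_#|Q| := \row_i f (enum_val i).

Definition indicator_col (T : {set Q}) : 'cV[rat]_#|Q| := \col_i (enum_val i \in T)%:R.

Definition transition_mx x : 'M[rat]_#|Q| :=
  \matrix_(i, j) (enum_val i == delta (enum_val j) x)%:R.

Lemma mul_transition_mx (f : Q -> rat) x :
  state_row f *m transition_mx x = state_row (fun q => f (delta q x)).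
Proof.
apply/rowP => j; rewrite !mxE (bigD1 (enum_rank (delta (enum_val j) x))) //=.
rewrite big1 ?addr0 => [|i]; first by rewrite !mxE enum_rankK eqxx mulr1.
by rewrite !mxE -(inj_eq enum_val_inj) enum_rankK => /negbTE ->; rewrite mulr0.
Qed.

Lemma mul_indicator_col (f : Q -> rat) (T : {set Q}) :
  (state_row f *m indicator_col T) 0 0 = \sum_(q in T) f q.
Proof.
rewrite !mxE; under eq_bigr => i _ do rewrite !mxE.
rewrite -(big_enum_val (fun q => f q * (q \in T)%:R)) [RHS]big_mkcond /=.
by apply: eq_bigr => q _; case: (q \in T); rewrite ?mulr1 ?mulr0.
Qed.

Lemma short_return_word (W : seq S) : synchronizing delta -> (1 < rank_word delta W)%N ->
  exists2 u, (size u <= #|Q|.-1)%N & (rank_word delta (W ++ u ++ W) < rank_word delta W)%N.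
Proof.
move=> [z /reset_word_const [t0 z_const]] rank_gt1.
set T := image_word delta W; set k := rank_word delta W.
have [t tT] : exists t, t \in T by apply/card_gt0P; apply: ltnW.
apply: NNPP => no_return.
pose fiber u := [set s in T | dw s (u ++ W) == t].
have fiber_short u : (size u <= #|Q|.-1)%N -> #|fiber u| = 1%N.
  move=> u_le; apply: card_fiber_eq1 tT _; rewrite leqNgt.
  by apply/negP => lt_rank; apply: no_return; exists u.
pose vec u := state_row (fun q => k%:R * (dw q (u ++ W) == t)%:R - 1).
have vec_mx_word u : vec u = mx_word transition_mx (vec [::]) u.
  by elim: u => //= x u <-; rewrite mul_transition_mx.
have vec_T u : (vec u *m indicator_col T) 0 0 = k%:R * #|fiber u|%:R - k%:R.
  by rewrite mul_indicator_col sumrB sumr_const -mulr_sumr sumr_bool_card.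
have vanish w : vec w *m indicator_col T = 0.
  rewrite vec_mx_word; apply: mx_word_mul_eq0 => {}w w_le.
  rewrite -vec_mx_word; apply/matrixP => i j.
  by rewrite !ord1 vec_T fiber_short // mulr1 subrr mxE.
have fiber_z : fiber z = if dw t0 W == t then T else set0.
  apply/setP => s; rewrite !inE delta_word_cat z_const.
  by case: ifP; rewrite ?inE ?andbT ?andbF.
have /matrixP /(_ 0 0) := vanish z; rewrite vec_T mxE fiber_z.
have k_neq0 : k%:R != 0 :> rat by rewrite pnatr_eq0 -lt0n ltnW.
case: eqP => _ /eqP; last by rewrite cards0 mulr0 sub0r oppr_eq0 (negbTE k_neq0).
rewrite -[#|T|]/k -[X in _ - X]mulr1 -mulrBr mulf_eq0 (negbTE k_neq0) subr_eq0 pnatr_eq1.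
by rewrite gtn_eqF.
Qed.

End AutomatonWords.

Section LetterOfSmallRank.
Variables (Q S : finType) (delta : Q -> S -> Q) (a : S).
Hypothesis sync : synchronizing delta.
Local Notation dw := (delta_word delta).
Let n := #|Q|.
Let U := image_word delta [:: a].
Let r := #|U|.

Let act (u : seq S) (s : Q) := dw s (rcons u a).
Let short (u : seq S) := size u <= n.-1.
Let expand (om : seq (seq S)) := flatten [seq rcons u a | u <- om].

Lemma act_in_U u s : act u s \in U.
Proof. by rewrite /act -cats1 delta_word_cat; apply: imset_f. Qed.

Lemma act_word_expand om s : act_word act om s = dw s (expand om).
Proof. by elim: om s => //= u om IH s; rewrite IH delta_word_cat. Qed.

Lemma image_word_expand om : image_word delta (a :: expand om) = act_set act U om.
Proof.
by rewrite -cat1s image_word_cat; apply: eq_imset => q; rewrite act_word_expand.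
Qed.

Lemma restricted_synchronizing : exists om, all short om /\ #|act_set act U om| <= 1.
Proof.
suff shrink c om : all short om -> #|act_set act U om| <= c ->
    exists om, all short om /\ #|act_set act U om| <= 1.
  by apply: (shrink #|Q| [::]); last exact: max_card.
elim: c om => [|c IH] om short_om card_le; first by exists om; rewrite (leq_trans card_le).
have [|card_gt1] := leqP #|act_set act U om| 1; first by exists om.
have := short_return_word (W := a :: expand om) sync.
rewrite /rank_word image_word_expand => /(_ card_gt1) [u short_u rank_lt].
apply: (IH (om ++ u :: om)); first by rewrite all_cat /= short_om andbT; apply: short_u.
rewrite -image_word_expand /expand map_cat flatten_cat /= -/(expand om) cat_rcons.
by rewrite -ltnS (leq_trans rank_lt).
Qed.

Lemma compress_subset (T : {set Q}) : T \subset U ->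
  exists om, [/\ all short om, #|act_set act T om| <= 1
                & size om <= compression_budget r #|T|].
Proof.
have [c] := ubnP #|T|; elim: c T => // c IH T card_lt T_sub_U.
have [T_le1|T_gt1] := leqP #|T| 1; first by exists [::]; rewrite act_set_nil.
have compressible : exists om, compressing act short T om.
  have [om [short_om card_om]] := restricted_synchronizing; exists om.
  rewrite /compressing short_om (leq_ltn_trans _ T_gt1) //.
  exact: leq_trans (subset_leq_card (imsetS _ T_sub_U)) card_om.
have [w1 [/andP [short_w1 card_w1] size_w1]] :=
  short_compressing_word (ok := short) act_in_U T_sub_U compressible.
have [w2 [short_w2 card_w2 size_w2]] :=
  IH _ (leq_trans card_w1 card_lt) (act_set_sub act_in_U _ T_sub_U).
exists (w1 ++ w2); rewrite all_cat short_w1 act_set_cat size_cat; split => //.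
rewrite (compression_budget_pred _ T_gt1) addnC leq_add //.
apply: leq_trans size_w2 (compression_budget_mono _ _).
by rewrite -ltnS (ltn_predK T_gt1).
Qed.

Lemma card_states_gt0 : 0 < n.
Proof. by have [z /reset_word_const [t _]] := sync; apply/card_gt0P; exists t. Qed.

Lemma rank_letter_gt0 : 0 < r.
Proof.
have /card_gt0P [q _] := card_states_gt0.
by apply/card_gt0P; exists (delta q a); apply: imset_f.
Qed.

Lemma size_expand om : all short om -> size (expand om) <= n * size om.
Proof.
elim: om => //= u om IH /andP [short_u short_om].
rewrite size_cat size_rcons mulnS leq_add ?IH //.
by rewrite -(prednK card_states_gt0) ltnS.
Qed.

Lemma reset_word_budget : exists2 w, reset_word delta w & size w <= 1 + n * 'C(r.+1, 3).
Proof.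
have [om [short_om card_om size_om]] := compress_subset (subxx U).
exists (a :: expand om).
  rewrite /reset_word /rank_word image_word_expand eqn_leq card_om card_gt0.
  by rewrite imset_eq0 -card_gt0 rank_letter_gt0.
rewrite -compression_budget_diag /= add1n ltnS.
by rewrite (leq_trans (size_expand short_om)) // leq_mul2l size_om orbT.
Qed.

End LetterOfSmallRank.

Theorem corollary1 (Q S : finType) (delta : Q -> S -> Q)
  (Hsync : synchronizing delta) (a : S) :
  (rank_word delta [:: a]) ^ 3 <= 6 * #|Q| - 6 ->
  rt Hsync <= (#|Q| - 1) ^ 2.
Proof.
move=> rank_le; have [w reset_w size_w] := reset_word_budget a Hsync.
apply: leq_trans (rt_leq_size Hsync reset_w) _.
exact: leq_trans size_w (cubic_budget_le (rank_letter_gt0 a Hsync) rank_le).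
Qed.
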